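(* There exists no function $f:\mathbb{N}\to\mathbb{N}$ such that $\chi_{\mu_2}(G\,\square\, G)\le f(\chi_{\mu_2}(G))$ holds for all graphs $G$.
   Context: The Cartesian product $G\,\square\, H$ has vertex set $V(G)\times V(H)$, with $(g,h)$ adjacent to $(g',h')$ iff either $g=g'$ and $hh'\in E(H)$, or $gg'\in E(G)$ and $h=h'$. A set $M\subseteq V(X)$ is a $2$-distance mutual-visibility set if for every two vertices $u,v\in M$ there exists a shortest $u,v$-path of length at most $2$ none of whose internal vertices lies in $M$. $\chi_{\mu_2}(X)$ is the minimum cardinality of a partition of $V(X)$ into $2$-distance mutual-visibility sets. *)

From mathcomp Require Import all_boot.
From mathcomp Require Import boolp.
Set Implicit Arguments. Unset Strict Implicit. Unset Printing Implicit Defensive.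

Section Defs.
Variable T : finType.

Definition simple_graph (e : rel T) := symmetric e /\ irreflexive e.

(* A u,v-walk is represented by the sequence p of vertices after u:
   u :: p is an e-path ending at v; its length is size p. *)
Definition walk (e : rel T) (u v : T) (p : seq T) : bool :=
  path e u p && (last u p == v).

Definition shortest_path (e : rel T) (u v : T) (p : seq T) : Prop :=
  walk e u v p /\ forall q, walk e u v q -> size p <= size q.

(* Internal vertices of the path u :: p (all but the two endpoints). *)
Definition internal (p : seq T) : seq T := take (size p).-1 p.

Definition dmv2 (e : rel T) (M : {set T}) : Prop :=
  forall u v, u \in M -> v \in M ->
    exists p, [/\ shortest_path e u v p, size p <= 2 &
                  forall x, x \in internal p -> x \notin M].

Definition dmv2_partition (e : rel T) (P : {set {set T}}) : Prop :=
  partition P [set: T] /\ forall B, B \in P -> dmv2 e B.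

(* chi_{mu_2}: the minimum cardinality of such a partition (the partition into
   singletons always qualifies and has #|T| blocks, so #|T| is a valid default). *)
Definition chi_mu2 (e : rel T) : nat :=
  \big[minn/#|T|]_(P : {set {set T}} | `[< dmv2_partition e P >]) #|P|.
End Defs.

Definition cart_prod (T1 T2 : finType) (e1 : rel T1) (e2 : rel T2) :
  rel (T1 * T2)%type :=
  fun x y => ((x.1 == y.1) && e2 x.2 y.2) || (e1 x.1 y.1 && (x.2 == y.2)).

From mathcomp Require Import all_boot.
From mathcomp Require Import boolp.

Set Implicit Arguments. Unset Strict Implicit. Unset Printing Implicit Defensive.

(* The star K_{1,n} has chi_mu2 <= 2: the centre alone, and the leaves, which
   pairwise see each other through the centre.  In K_{1,n} x K_{1,n}, however,
   two leaf-leaf vertices lying in different rows and different columns are at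
   distance 4, so a 2-distance mutual-visibility set meets the n^2 leaf-leaf
   vertices inside a single row or column, i.e. in at most n of them.  Hence
   chi_mu2 (K_{1,n} x K_{1,n}) >= n, which is unbounded while chi_mu2 (K_{1,n})
   stays at most 2. *)

Lemma bigmin_leq (I : eqType) (r : seq I) (P : pred I) (F : I -> nat) x i :
  i \in r -> P i -> \big[minn/x]_(j <- r | P j) F j <= F i.
Proof.
elim: r => // j r IHr; rewrite inE big_cons => /orP[/eqP <- -> | ir Pi].
  exact: geq_minl.
by case: ifP => _; [apply: leq_trans (geq_minr _ _) _|]; exact: IHr.
Qed.

Section Visibility.
Variables (T : finType) (e : rel T).

Lemma chi_mu2_le (P : {set {set T}}) : dmv2_partition e P -> chi_mu2 e <= #|P|.
Proof.
by move=> partP; apply: bigmin_leq; rewrite ?mem_index_enum //; exact/asboolP.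
Qed.

Lemma chi_mu2_ge n :
  n <= #|T| -> (forall P, dmv2_partition e P -> n <= #|P|) -> n <= chi_mu2 e.
Proof.
move=> n_le_T n_le_P; apply: (big_ind (leq n)) => // [a b na nb|P /asboolP].
  by rewrite leq_min na nb.
exact: n_le_P.
Qed.

Lemma walk_nil u v : walk e u v [::] = (u == v).
Proof. by []. Qed.

Lemma shortest_path_common_neighbour u v w :
  u != v -> ~~ e u v -> e u w -> e w v -> shortest_path e u v [:: w; v].
Proof.
move=> neq_uv not_uv uw wv; split; first by rewrite /walk /= uw wv eqxx.
case=> [|x [|y q]] //; first by rewrite walk_nil (negbTE neq_uv).
by rewrite /walk /= andbT => /andP[ux /eqP xv]; rewrite -xv ux in not_uv.
Qed.

Lemma dmv2_common_neighbour (M : {set T}) :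
  {in M &, forall u v, ~~ e u v} ->
  {in M &, forall u v, u != v -> exists2 w, w \notin M & e u w && e w v} ->
  dmv2 e M.
Proof.
move=> indepM nbrM u v uM vM; have [<-|neq_uv] := eqVneq u v.
  by exists [::]; split=> //; split; rewrite ?walk_nil.
have [w wM /andP[uw wv]] := nbrM u v uM vM neq_uv.
exists [:: w; v]; split=> //.
  exact: shortest_path_common_neighbour (indepM u v uM vM) uw wv.
by move=> x; rewrite /internal /= inE => /eqP ->.
Qed.

End Visibility.

Section Partitions.
Variable T : finType.

Lemma card_preim_partition (rT : finType) (f : T -> rT) (D : {set T}) :
  #|preim_partition f D| <= #|f @: D|.
Proof.
pose block (b : rT) := [set y in D | b == f y].
rewrite /preim_partition /equivalence_partition.
rewrite (eq_imset (g := block \o f)) // imset_comp; exact: leq_imset_card.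
Qed.

Lemma preim_partition_block (rT : eqType) (f : T -> rT) (D B : {set T}) u v :
  B \in preim_partition f D -> u \in B -> v \in B -> f u = f v.
Proof.
by case/imsetP=> x _ ->; rewrite !inE => /andP[_ /eqP <-] /andP[_ /eqP].
Qed.

Lemma card_partition_meet (P : {set {set T}}) (D L : {set T}) m :
  partition P D -> L \subset D -> {in P, forall B, #|B :&: L| <= m} ->
  #|L| <= #|P| * m.
Proof.
move=> partP sLD meetP.
have -> : #|L| = \sum_(B in P) #|B :&: L|.
  have -> : #|L| = \sum_(x in D | x \in L) 1.
    rewrite -sum1_card; apply: eq_bigl => x.
    by apply/idP/andP=> [xL|[]//]; rewrite (subsetP sLD).
  rewrite (set_partition_big_cond _ partP); apply: eq_bigr => B _.
  by rewrite -sum1_card; apply: eq_bigl => x; rewrite inE.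
by rewrite -sum_nat_const; apply: leq_sum.
Qed.

End Partitions.

Section GridLines.
Variables T1 T2 : finType.

Lemma cart_prod_walk_le2 (e1 : rel T1) (e2 : rel T2) u v p :
  walk (cart_prod e1 e2) u v p -> size p <= 2 ->
  [|| u.1 == v.1, u.2 == v.2 | e1 u.1 v.1 && e2 u.2 v.2].
Proof.
case: p => [|x [|y [|//]]] + _.
- by rewrite walk_nil => /eqP ->; rewrite eqxx.
- rewrite /walk /= /cart_prod andbT => /andP[ux /eqP <-].
  by case/orP: ux => /andP[ux1 ux2]; rewrite ux1 ux2 ?orbT.
- rewrite /walk /= /cart_prod andbT => /andP[/andP[ux xy] /eqP <-].
  case/orP: ux => /andP[ux1 ux2]; case/orP: xy => /andP[xy1 xy2].
  + by rewrite (eqP ux1) xy1.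
  + by rewrite (eqP ux1) xy1 -(eqP xy2) ux2 !orbT.
  + by rewrite (eqP ux2) xy2 -(eqP xy1) ux1 !orbT.
  + by rewrite (eqP ux2) xy2 orbT.
Qed.

Lemma dmv2_cart_prod_aligned (e1 : rel T1) (e2 : rel T2) (M : {set T1 * T2})
    u v :
  dmv2 (cart_prod e1 e2) M -> u \in M -> v \in M -> ~~ e1 u.1 v.1 ->
  (u.1 == v.1) || (u.2 == v.2).
Proof.
move=> dmvM uM vM not_uv; have [p [[walk_p _] size_p _]] := dmvM u v uM vM.
by have := cart_prod_walk_le2 walk_p size_p; rewrite (negbTE not_uv) orbF.
Qed.

Lemma aligned_line (S : {set T1 * T2}) :
  {in S &, forall u v, (u.1 == v.1) || (u.2 == v.2)} ->
  {in S &, forall u v, u.1 = v.1} \/ {in S &, forall u v, u.2 = v.2}.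
Proof.
move=> alignedS.
have [row|] := boolP [forall u in S, forall v in S, u.1 == v.1].
  left=> u v uS vS; apply/eqP.
  by move/forall_inP/(_ u uS)/forall_inP: row; apply.
case/forall_inPn=> s sS /forall_inPn[t tS neq_st]; right.
have col (u : T1 * T2) : u \in S -> u.2 = s.2.
  move=> uS; apply/eqP/negPn/negP=> neq_us.
  have /eqP us1 : u.1 == s.1.
    by have := alignedS u s uS sS; rewrite (negbTE neq_us) orbF.
  have /eqP ut1 : u.1 == t.1.
    have /eqP st2 : s.2 == t.2.
      by have := alignedS s t sS tS; rewrite (negbTE neq_st).
    by have := alignedS u t uS tS; rewrite -st2 (negbTE neq_us) orbF.
  by rewrite -us1 ut1 eqxx in neq_st.
by move=> u v uS vS; rewrite !col.
Qed.

Lemma card_aligned (S : {set T1 * T2}) (A : {set T1}) (B : {set T2}) :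
  S \subset setX A B -> {in S &, forall u v, (u.1 == v.1) || (u.2 == v.2)} ->
  #|S| <= maxn #|A| #|B|.
Proof.
move=> /subsetP sSAB /aligned_line[row|col].
  have inj2 : {in S &, injective snd}.
    move=> [u1 u2] [v1 v2] uS vS /= eq2.
    by move: (row _ _ uS vS) => /= ->; rewrite eq2.
  rewrite -(card_in_imset inj2); apply: leq_trans (leq_maxr _ _).
  apply/subset_leq_card/subsetP=> _ /imsetP[u uS ->].
  by have := sSAB u uS; rewrite inE => /andP[].
have inj1 : {in S &, injective fst}.
  move=> [u1 u2] [v1 v2] uS vS /= eq1.
  by move: (col _ _ uS vS) => /= ->; rewrite eq1.
rewrite -(card_in_imset inj1); apply: leq_trans (leq_maxl _ _).
apply/subset_leq_card/subsetP=> _ /imsetP[u uS ->].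
by have := sSAB u uS; rewrite inE => /andP[].
Qed.

End GridLines.

(* The star K_{1,n}: centre [None], leaves [Some i]. *)
Definition star n : rel (option 'I_n) := fun x y => (x == None) != (y == None).
Arguments star : clear implicits.

Lemma star_simple n : simple_graph (star n).
Proof. by split=> [x y|x]; rewrite /star ?eqxx // eq_sym. Qed.

Lemma star_chi_mu2_le2 n : chi_mu2 (star n) <= 2.
Proof.
pose P := preim_partition (fun x : option 'I_n => x == None) [set: option 'I_n].
apply: leq_trans (chi_mu2_le (P := P) _) _; last first.
  by apply: leq_trans (card_preim_partition _ _) _; rewrite -card_bool max_card.
split=> [|B PB]; first exact: preim_partitionP.
have sameB u v : u \in B -> v \in B -> (u == None) = (v == None).
  exact: preim_partition_block PB.
apply: dmv2_common_neighbour => [u v uB vB|u v uB vB neq_uv].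
  by rewrite /star (sameB u v uB vB) eqxx.
have leaf_uv : (u != None) && (v != None).
  by move: neq_uv (sameB u v uB vB); case: u v {uB vB} => [a|] [b|].
exists None; last by move: leaf_uv; case: u v {uB vB neq_uv} => [a|] [b|].
by apply: contraTN leaf_uv => NB; rewrite (sameB _ _ uB NB) eqxx.
Qed.

Lemma star_prod_partition_ge n P :
  dmv2_partition (cart_prod (star n) (star n)) P -> n <= #|P|.
Proof.
case=> partP dmvP; pose leaves := [set~ @None 'I_n].
have card_leaves : #|leaves| = n by rewrite cardsC1 card_option card_ord.
have : #|setX leaves leaves| <= #|P| * n.
  apply: (card_partition_meet partP (subsetT _)) => B PB.
  suff aligned : {in B :&: setX leaves leaves &,
                   forall u v, (u.1 == v.1) || (u.2 == v.2)}.
    by have := card_aligned (subsetIr _ _) aligned; rewrite maxnn card_leaves.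
  move=> u v; rewrite !inE => /andP[uB /andP[u1 _]] /andP[vB /andP[v1 _]].
  apply: dmv2_cart_prod_aligned (dmvP B PB) uB vB _.
  by move: u1 v1; rewrite /star => /negbTE -> /negbTE ->.
rewrite cardsX card_leaves.
by rewrite leq_mul2r => /predU1P[n0|//]; rewrite [X in X <= _]n0.
Qed.

Lemma star_prod_chi_mu2_ge n : n <= chi_mu2 (cart_prod (star n) (star n)).
Proof.
apply: chi_mu2_ge => [|P]; last exact: star_prod_partition_ge.
rewrite card_prod card_option card_ord mulSn.
exact: leq_trans (leqnSn n) (leq_addr _ _).
Qed.

Theorem mainTheorem15 :
  ~ exists f : nat -> nat,
      forall (T : finType) (e : rel T), simple_graph e ->
        chi_mu2 (cart_prod e e) <= f (chi_mu2 e).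
Proof.
move=> [f bound_f]; pose K := \max_(i < 3) f i.
have f_star : f (chi_mu2 (star K.+1)) <= K.
  exact: leq_bigmax (fun i : 'I_3 => f i) (@Ordinal 3 _ (star_chi_mu2_le2 _)).
have := leq_trans (star_prod_chi_mu2_ge K.+1) (bound_f _ _ (star_simple K.+1)).
by move/leq_trans/(_ f_star); rewrite ltnn.
Qed.
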